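(* Let $X\subseteq W$ be a block subspace, $(y_n)$ a block sequence in $W$, $\alpha<\omega_1$ and $K,C\ge1$. Assume that (a) II has a strategy in $F^\alpha_X$ to play $(x_0,\dots,x_k)$ such that $(x_0,\dots,x_k)\sim_K(y_0,\dots,y_k)$, and (b) II has a strategy in $A^\alpha_X$ to play $(u_0,v_0,\dots,u_k,v_k)$ such that $(u_0,\dots,u_k)\sim_C(v_0,\dots,v_k)$. Then II has a strategy in $G^\alpha_X$ to play $(v_0,\dots,v_k)$ such that $(v_0,\dots,v_k)\sim_{KC}(y_0,\dots,y_k)$.
   Context: Let $\mathcal W$ be a real Banach space with Schauder basis $(e_n)$. Fix a countable subfield $\mathfrak F\subseteq\mathbb R$ such that $\|\sum_{n\le m}a_ne_n\|\in\mathfrak F$ whenever all $a_n\in\mathfrak F$, and let $W$ be the $\mathfrak F$-vector space of finite $\mathfrak F$-linear combinations of the $e_n$, with the norm of $\mathcal W$; subspaces are $\mathfrak F$-linear in $W$. For nonzero $x=\sum a_ne_n$, ${\rm supp}(x)=\{n:a_n\neq0\}$, and $x<y$ means $\max{\rm supp}(x)<\min{\rm supp}(y)$. A block sequence is a sequence of nonzero vectors $x_0<x_1<\dots$; a block subspace is the span of an infinite block sequence. $[e_i]_{i>n}$ is the span of $\{e_i:i>n\}$. $(x_i)_{i\le k}\sim_K(y_i)_{i\le k}$ means $\frac1K\|\sum a_ix_i\|\le\|\sum a_iy_i\|\le K\|\sum a_ix_i\|$ for all real $a_i$. In each game below, $\xi_l$ denotes ordinals with $\xi_0<\alpha$ and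 $\xi_l<\xi_{l-1}$ for $l\ge1$, the game ends after II's response in the round $k$ in which $\xi_k=0$ (immediately with empty outcome if $\alpha=0$). Game $G^\alpha_X$: in round $l$, I plays a block subspace $Y_l\subseteq X$ and $\xi_l$; II plays a finite-dimensional $F_l\subseteq Y_l$ and a nonzero $v_l\in F_0+\dots+F_l$; outcome $(v_0,\dots,v_k)$. Game $F^\alpha_X$: in round $l$, I plays an integer $n_l$ and $\xi_l$; II plays a finite-dimensional $F_l\subseteq X\cap[e_i]_{i>n_l}$ and a nonzero $x_l\in F_0+\dots+F_l$; outcome $(x_0,\dots,x_k)$. Game $A^\alpha_X$: in round $l$, II plays an integer $n_l$; I plays a finite-dimensional $E_l\subseteq X\cap[e_i]_{i>n_l}$, a nonzero $u_l\in E_0+\dots+E_l$, a block subspace $Y_l\subseteq X$ and $\xi_l$; II plays a finite-dimensional $F_l\subseteq Y_l$ and a nonzero $v_l\in F_0+\dots+F_l$; outcome $(u_0,v_0,\dots,u_k,v_k)$. ''II has a strategy to play ... such that P'' means II can ensure the outcome satisfies P. *)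

From HB Require Import structures.
From mathcomp Require Import all_boot all_order all_algebra.
From mathcomp Require Import all_classical all_reals all_analysis.
Set Implicit Arguments. Unset Strict Implicit. Unset Printing Implicit Defensive.
Import Order.TTheory GRing.Theory Num.Theory.
Import numFieldNormedType.Exports.
Local Open Scope classical_set_scope.
Local Open Scope ring_scope.

(* Each round: II makes a "pre-move" p : P (unit if none), then I     *)
(* plays m : M, then II answers q : Q.  A strategy for II is a pair   *)
(* (tau, sigma) of functions of the full history.                     *)
Section Games.
Variables (P M Q : Type).
Definition round := (P * M * Q)%type.

Fixpoint run (tau : seq round -> P) (sigma : seq round -> P -> M -> Q)
    (h : seq round) (ms : seq M) : seq round :=
  match ms with
  | [::] => h
  | m :: ms' => run tau sigma (rcons h (tau h, m, sigma h (tau h) m)) ms'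
  end.

Fixpoint all_rounds (ok : seq round -> round -> Prop) (h rest : seq round) : Prop :=
  match rest with
  | [::] => True
  | r :: rest' => ok h r /\ all_rounds ok (rcons h r) rest'
  end.

Definition II_has_strategy
    (legalI : seq round -> P -> M -> Prop)
    (legalII : seq round -> P -> M -> Q -> Prop)
    (complete : seq M -> Prop) (Win : seq round -> Prop) : Prop :=
  exists (tau : seq round -> P) (sigma : seq round -> P -> M -> Q),
    forall ms : seq M,
      let pl := run tau sigma [::] ms in
      all_rounds (fun h r => legalI h r.1.1 r.1.2) [::] pl ->
      complete ms ->
      all_rounds (fun h r => legalII h r.1.1 r.1.2 r.2) [::] pl /\ Win pl.
End Games.

(* Ordinals xi < alpha : alpha is represented by the (countable)      *)
(* well-ordered set (T, lt) of ordinals below it; "xi = 0" means xi is *)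
(* the least element.                                                 *)
Section Ordinals.
Variables (T : Type) (lt : T -> T -> Prop).

Definition countable_wellorder : Prop :=
  (exists f : T -> nat, injective f) /\
  well_founded lt /\
  (forall x, ~ lt x x) /\
  (forall x y z, lt x y -> lt y z -> lt x z) /\
  (forall x y, lt x y \/ x = y \/ lt y x).

Definition is_zero (xi : T) : Prop := forall eta, ~ lt eta xi.

Definition ord_legal (prev : seq T) (xi : T) : Prop :=
  match prev with [::] => True | p :: _ => lt xi (last p prev) end.

(* the game ends after the round k with xi_k = 0, or immediately if alpha = 0 *)
Definition ord_complete (xis : seq T) : Prop :=
  match xis with
  | [::] => (T -> False)
  | x :: _ => is_zero (last x xis)
  end.
End Ordinals.

Section Banach.
Variables (R : realType) (V : normedModType R) (e : nat -> V) (c : nat -> V -> R)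
  (Fld : set R).

Definition schauder_basis : Prop :=
  forall x : V,
    ((fun m => \sum_(i < m) c i x *: e i) @ \oo --> x) /\
    (forall a : nat -> R, ((fun m => \sum_(i < m) a i *: e i) @ \oo --> x) ->
       forall i, a i = c i x).

Definition subfield (S : set R) : Prop :=
  S 0 /\ S 1 /\
  (forall x y, S x -> S y -> S (x + y) /\ S (x * y)) /\
  (forall x, S x -> S (- x)) /\
  (forall x, S x -> x != 0 -> S x^-1).

Definition norm_closed : Prop :=
  forall s : seq R, (forall i, Fld s`_i) -> Fld `|\sum_(i < size s) s`_i *: e i|.

Definition inW (x : V) : Prop :=
  exists s : seq R, (forall i, Fld s`_i) /\ x = \sum_(i < size s) s`_i *: e i.

Definition Fspan (S : seq V) : set V :=
  [set x | exists a : seq R, size a = size S /\ (forall i, Fld a`_i) /\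
           x = \sum_(i < size S) a`_i *: S`_i].

Definition fin_sub (S : seq V) (Y : set V) : Prop :=
  forall i, (i < size S)%N -> Y S`_i.

Definition blk (x y : V) : Prop :=
  forall i j, c i x != 0 -> c j y != 0 -> (i < j)%N.

Definition block_seq (z : nat -> V) : Prop :=
  (forall n, inW (z n) /\ z n != 0) /\ (forall n, blk (z n) (z n.+1)).

Definition block_subspace (Y : set V) : Prop :=
  exists z, block_seq z /\ Y = [set x | exists n, Fspan [seq z i | i <- iota 0 n] x].

Definition tail_space (n : int) : set V :=
  [set x | inW x /\ forall i : nat, (i%:Z <= n) -> c i x = 0].

Definition equivK (K : R) (xs ys : seq V) : Prop :=
  size xs = size ys /\
  forall a : nat -> R,
    K^-1 * `|\sum_(i < size xs) a i *: xs`_i| <= `|\sum_(i < size xs) a i *: ys`_i| /\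
    `|\sum_(i < size xs) a i *: ys`_i| <= K * `|\sum_(i < size xs) a i *: xs`_i|.

Variables (T : Type) (lt : T -> T -> Prop) (X : set V).

(* ---- Game G^alpha_X : I plays (Y_l, xi_l), II plays (F_l, v_l) ---- *)
Definition G_round := round unit (set V * T) (seq V * V).
Definition G_legalI (h : seq G_round) (_ : unit) (m : set V * T) : Prop :=
  block_subspace m.1 /\ m.1 `<=` X /\ ord_legal lt [seq r.1.2.2 | r <- h] m.2.
Definition G_legalII (h : seq G_round) (_ : unit) (m : set V * T) (q : seq V * V) : Prop :=
  fin_sub q.1 m.1 /\ q.2 != 0 /\ Fspan (flatten ([seq r.2.1 | r <- h] ++ [:: q.1])) q.2.
Definition G_complete (ms : seq (set V * T)) : Prop := ord_complete lt [seq m.2 | m <- ms].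
Definition G_outcome (pl : seq G_round) : seq V := [seq r.2.2 | r <- pl].

(* ---- Game F^alpha_X : I plays (n_l, xi_l), II plays (F_l, x_l) ---- *)
Definition F_round := round unit (int * T) (seq V * V).
Definition F_legalI (h : seq F_round) (_ : unit) (m : int * T) : Prop :=
  ord_legal lt [seq r.1.2.2 | r <- h] m.2.
Definition F_legalII (h : seq F_round) (_ : unit) (m : int * T) (q : seq V * V) : Prop :=
  fin_sub q.1 (X `&` tail_space m.1) /\ q.2 != 0 /\
  Fspan (flatten ([seq r.2.1 | r <- h] ++ [:: q.1])) q.2.
Definition F_complete (ms : seq (int * T)) : Prop := ord_complete lt [seq m.2 | m <- ms].
Definition F_outcome (pl : seq F_round) : seq V := [seq r.2.2 | r <- pl].

(* ---- Game A^alpha_X : II plays n_l; I plays (E_l, u_l, Y_l, xi_l);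
        II plays (F_l, v_l) ---- *)
Definition A_Imove := (seq V * V * set V * T)%type.
Definition A_round := round int A_Imove (seq V * V).
Definition A_legalI (h : seq A_round) (n : int) (m : A_Imove) : Prop :=
  fin_sub m.1.1.1 (X `&` tail_space n) /\ m.1.1.2 != 0 /\
  Fspan (flatten ([seq r.1.2.1.1.1 | r <- h] ++ [:: m.1.1.1])) m.1.1.2 /\
  block_subspace m.1.2 /\ m.1.2 `<=` X /\
  ord_legal lt [seq r.1.2.2 | r <- h] m.2.
Definition A_legalII (h : seq A_round) (_ : int) (m : A_Imove) (q : seq V * V) : Prop :=
  fin_sub q.1 m.1.2 /\ q.2 != 0 /\ Fspan (flatten ([seq r.2.1 | r <- h] ++ [:: q.1])) q.2.
Definition A_complete (ms : seq A_Imove) : Prop := ord_complete lt [seq m.2 | m <- ms].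
Definition A_outcome_u (pl : seq A_round) : seq V := [seq r.1.2.1.1.2 | r <- pl].
Definition A_outcome_v (pl : seq A_round) : seq V := [seq r.2.2 | r <- pl].

End Banach.

From HB Require Import structures.
From mathcomp Require Import all_boot all_order all_algebra.
From mathcomp Require Import all_classical all_reals all_analysis.
Import Order.TTheory GRing.Theory Num.Theory.
Import numFieldNormedType.Exports.
Local Open Scope classical_set_scope.
Local Open Scope ring_scope.

Set Implicit Arguments.

(* II wins G by running her strategies for F and A side by side.  When I
   plays (Y_l, xi_l) in G, II lets I play (n_l, xi_l) in F, where n_l is the
   integer her A-strategy opens the round with; the answer (F_l, x_l) of the
   F-strategy is a legal move (E_l, u_l) := (F_l, x_l) of I in A, completed
   by (Y_l, xi_l).  The answer (F_l, v_l) of the A-strategy is then II's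
   move in G.  Both auxiliary plays are legal and complete, so
   (v_l) ~_C (u_l) = (x_l) ~_K (y_l). *)

Section Equivalence.
Variables (R : realType) (V : normedModType R).

Lemma equivK_sym (K : R) (xs ys : seq V) :
  0 < K -> equivK K xs ys -> equivK K ys xs.
Proof.
move=> K0 [sz H]; split=> [|a]; first by [].
rewrite -sz; have [lo hi] := H a.
by split; [rewrite ler_pdivrMl | rewrite -ler_pdivrMl].
Qed.

Lemma equivK_trans (K C : R) (xs ys zs : seq V) :
  0 < K -> 0 < C -> equivK K xs ys -> equivK C ys zs -> equivK (K * C) xs zs.
Proof.
move=> K0 C0 [sxy Hxy] [syz Hyz]; split=> [|a]; first by rewrite sxy.
have [lo1 hi1] := Hxy a; rewrite -sxy in Hyz; have [lo2 hi2] := Hyz a.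
rewrite ler_pdivrMl // in lo1; rewrite ler_pdivrMl // in lo2.
split.
- rewrite ler_pdivrMl ?mulr_gt0 //.
  by apply: (le_trans lo1); rewrite -mulrA ler_pM2l.
- by apply: (le_trans hi2); rewrite [K * C]mulrC -mulrA ler_pM2l.
Qed.

End Equivalence.

Section Simulation.
Variables (R : realType) (V : normedModType R) (e : nat -> V) (c : nat -> V -> R)
  (Fld : set R) (T : Type) (lt : T -> T -> Prop) (X : set V).
Local Notation FR := (F_round V T).
Local Notation AR := (A_round V T).
Local Notation GR := (G_round V T).
Variables (tauF : seq FR -> unit) (sigmaF : seq FR -> unit -> int * T -> seq V * V).
Variables (tauA : seq AR -> int) (sigmaA : seq AR -> int -> A_Imove V T -> seq V * V).

Definition F_reply (hF : seq FR) (hA : seq AR) (m : set V * T) : FR :=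
  (tauF hF, (tauA hA, m.2), sigmaF hF (tauF hF) (tauA hA, m.2)).

Definition A_reply (hF : seq FR) (hA : seq AR) (m : set V * T) : AR :=
  let Imove := ((F_reply hF hA m).2.1, (F_reply hF hA m).2.2, m.1, m.2) in
  (tauA hA, Imove, sigmaA hA (tauA hA) Imove).

Definition G_reply (hF : seq FR) (hA : seq AR) (m : set V * T) : GR :=
  (tt, m, (A_reply hF hA m).2).

Fixpoint sim_F hF hA (ms : seq (set V * T)) : seq FR :=
  if ms is m :: ms' then
    F_reply hF hA m :: sim_F (rcons hF (F_reply hF hA m)) (rcons hA (A_reply hF hA m)) ms'
  else [::].

Fixpoint sim_A hF hA (ms : seq (set V * T)) : seq AR :=
  if ms is m :: ms' then
    A_reply hF hA m :: sim_A (rcons hF (F_reply hF hA m)) (rcons hA (A_reply hF hA m)) ms'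
  else [::].

Fixpoint sim_G hF hA (ms : seq (set V * T)) : seq GR :=
  if ms is m :: ms' then
    G_reply hF hA m :: sim_G (rcons hF (F_reply hF hA m)) (rcons hA (A_reply hF hA m)) ms'
  else [::].

Definition sim_step (st : seq FR * seq AR) (m : set V * T) :=
  (rcons st.1 (F_reply st.1 st.2 m), rcons st.2 (A_reply st.1 st.2 m)).

(* The auxiliary histories are recomputed from I's moves in the G-history. *)
Definition sim_state (h : seq GR) := foldl sim_step ([::], [::]) [seq r.1.2 | r <- h].

Definition G_premove (_ : seq GR) : unit := tt.

Definition G_answer (h : seq GR) (_ : unit) (m : set V * T) : seq V * V :=
  (A_reply (sim_state h).1 (sim_state h).2 m).2.

Lemma run_G_answer ms hG :
  run G_premove G_answer hG ms = hG ++ sim_G (sim_state hG).1 (sim_state hG).2 ms.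
Proof.
elim: ms hG => [|m ms IH] hG /=; first by rewrite cats0.
by rewrite IH /sim_state map_rcons foldl_rcons -cat_rcons.
Qed.

Lemma run_sim_F ms hF hA :
  run tauF sigmaF hF [seq r.1.2 | r <- sim_F hF hA ms] = hF ++ sim_F hF hA ms.
Proof.
elim: ms hF hA => [|m ms IH] hF hA /=; first by rewrite cats0.
by rewrite IH -cat_rcons.
Qed.

Lemma run_sim_A ms hF hA :
  run tauA sigmaA hA [seq r.1.2 | r <- sim_A hF hA ms] = hA ++ sim_A hF hA ms.
Proof.
elim: ms hF hA => [|m ms IH] hF hA /=; first by rewrite cats0.
by rewrite IH -cat_rcons.
Qed.

Lemma sim_F_ordinals ms hF hA : [seq r.1.2.2 | r <- sim_F hF hA ms] = [seq m.2 | m <- ms].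
Proof. by elim: ms hF hA => [|m ms IH] hF hA //=; rewrite IH. Qed.

Lemma sim_A_ordinals ms hF hA : [seq r.1.2.2 | r <- sim_A hF hA ms] = [seq m.2 | m <- ms].
Proof. by elim: ms hF hA => [|m ms IH] hF hA //=; rewrite IH. Qed.

Lemma F_outcome_sim ms hF hA : F_outcome (sim_F hF hA ms) = A_outcome_u (sim_A hF hA ms).
Proof. by elim: ms hF hA => [|m ms IH] hF hA //=; rewrite IH. Qed.

Lemma A_outcome_v_sim ms hF hA : A_outcome_v (sim_A hF hA ms) = G_outcome (sim_G hF hA ms).
Proof. by elim: ms hF hA => [|m ms IH] hF hA //=; rewrite IH. Qed.

Lemma size_sim_F ms hF hA : size (sim_F hF hA ms) = size (sim_G hF hA ms).
Proof. by elim: ms hF hA => [|m ms IH] hF hA //=; rewrite IH. Qed.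

Definition synced (hF : seq FR) (hA : seq AR) (hG : seq GR) : Prop :=
  [/\ [seq r.1.2.2 | r <- hF] = [seq r.1.2.2 | r <- hG],
      [seq r.1.2.2 | r <- hA] = [seq r.1.2.2 | r <- hG],
      [seq r.2.1 | r <- hF] = [seq r.1.2.1.1.1 | r <- hA] &
      [seq r.2.1 | r <- hA] = [seq r.2.1 | r <- hG]].

Lemma synced_rcons hF hA hG m :
  synced hF hA hG ->
  synced (rcons hF (F_reply hF hA m)) (rcons hA (A_reply hF hA m)) (rcons hG (G_reply hF hA m)).
Proof. by case=> E1 E2 E3 E4; split; rewrite !map_rcons ?E1 ?E2 ?E3 ?E4. Qed.

Lemma sim_F_legalI ms hF hA hG :
  synced hF hA hG ->
  all_rounds (fun h r => G_legalI e c Fld lt X h r.1.1 r.1.2) hG (sim_G hF hA ms) ->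
  all_rounds (fun h r => F_legalI lt h r.1.1 r.1.2) hF (sim_F hF hA ms).
Proof.
elim: ms hF hA hG => [|m ms IH] hF hA hG //= sync [[_ [_ Hxi]] Hrest].
split; last exact: IH (synced_rcons m sync) Hrest.
by case: sync => E1 _ _ _; rewrite /F_legalI /= E1.
Qed.

Lemma sim_A_legalI ms hF hA hG :
  synced hF hA hG ->
  all_rounds (fun h r => G_legalI e c Fld lt X h r.1.1 r.1.2) hG (sim_G hF hA ms) ->
  all_rounds (fun h r => F_legalII e c Fld X h r.1.1 r.1.2 r.2) hF (sim_F hF hA ms) ->
  all_rounds (fun h r => A_legalI e c Fld lt X h r.1.1 r.1.2) hA (sim_A hF hA ms).
Proof.
elim: ms hF hA hG => [|m ms IH] hF hA hG //= sync [[HY [HYX Hxi]] HGrest].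
move=> [[HE [Hu Hspan]] HFrest]; split; last exact: IH (synced_rcons m sync) HGrest HFrest.
by case: sync => _ E2 E3 _; rewrite /A_legalI /= -E3 E2.
Qed.

Lemma sim_G_legalII ms hF hA hG :
  synced hF hA hG ->
  all_rounds (fun h r => A_legalII (T:=T) Fld h r.1.1 r.1.2 r.2) hA (sim_A hF hA ms) ->
  all_rounds (fun h r => G_legalII (T:=T) Fld h r.1.1 r.1.2 r.2) hG (sim_G hF hA ms).
Proof.
elim: ms hF hA hG => [|m ms IH] hF hA hG //= sync [HA Hrest].
split; last exact: IH (synced_rcons m sync) Hrest.
by case: sync => _ _ _ E4; rewrite /G_legalII /= -E4.
Qed.

End Simulation.

Arguments sim_F_legalI {R V e c Fld T lt X tauF sigmaF tauA sigmaA ms hF hA hG}.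
Arguments sim_A_legalI {R V e c Fld T lt X tauF sigmaF tauA sigmaA ms hF hA hG}.
Arguments sim_G_legalII {R V Fld T tauF sigmaF tauA sigmaA ms hF hA hG}.

Theorem lemma4p6 (R : realType) (V : completeNormedModType R)
  (e : nat -> V) (c : nat -> V -> R) (Fld : set R)
  (T : Type) (lt : T -> T -> Prop)
  (X : set V) (y : nat -> V) (K C : R) :
  schauder_basis e c ->
  subfield Fld -> countable Fld -> norm_closed e Fld ->
  countable_wellorder lt ->
  block_subspace e c Fld X ->
  block_seq e c Fld y ->
  1 <= K -> 1 <= C ->
  II_has_strategy (F_legalI lt) (F_legalII e c Fld X)
    (F_complete lt)
    (fun pl => equivK K (F_outcome pl) [seq y i | i <- iota 0 (size pl)]) ->
  II_has_strategy (A_legalI e c Fld lt X) (A_legalII (T:=T) Fld)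
    (A_complete lt)
    (fun pl => equivK C (A_outcome_u pl) (A_outcome_v pl)) ->
  II_has_strategy (G_legalI e c Fld lt X) (G_legalII (T:=T) Fld)
    (G_complete lt)
    (fun pl => equivK (K * C) (G_outcome pl) [seq y i | i <- iota 0 (size pl)]).
Proof.
move=> _ _ _ _ _ _ _ K1 C1 [tauF [sigmaF winF]] [tauA [sigmaA winA]].
exists (@G_premove R V T), (G_answer tauF sigmaF tauA sigmaA) => ms /=.
rewrite run_G_answer /= => legalG complete.
have sync : @synced R V T [::] [::] [::] by [].
set sF := sim_F tauF sigmaF tauA sigmaA [::] [::] ms.
set sA := sim_A tauF sigmaF tauA sigmaA [::] [::] ms.
have := winF [seq r.1.2 | r <- sF].
rewrite run_sim_F cat0s /F_complete -map_comp sim_F_ordinals.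
move=> /(_ (sim_F_legalI sync legalG) complete) [legalF winFy].
have := winA [seq r.1.2 | r <- sA].
rewrite run_sim_A cat0s /A_complete -map_comp sim_A_ordinals.
move=> /(_ (sim_A_legalI sync legalG legalF) complete) [legalA winAuv].
split; first exact: sim_G_legalII sync legalA.
rewrite size_sim_F in winFy; rewrite A_outcome_v_sim -F_outcome_sim in winAuv.
have K0 : 0 < K by apply: lt_le_trans K1.
have C0 : 0 < C by apply: lt_le_trans C1.
by rewrite mulrC; exact: equivK_trans C0 K0 (equivK_sym C0 winAuv) winFy.
Qed.
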